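(* Let $\Theta$ be a space of input histories satisfying the free-choice condition and let $\hat\Theta\in\mathrm{CC}(\Theta)$ be a causal completion of $\Theta$. Then $E^{\hat\Theta}=E^\Theta$ and $I^{\hat\Theta}_\omega=I^\Theta_\omega$ for all $\omega\in E^\Theta$.
   Context: A partial function is a function $f$ with domain $\mathrm{dom}(f)$ a subset of an index set, values in given sets; ordered by restriction. Compatible = agreeing on common domain; a compatible set $\mathcal F$ has join $\bigvee\mathcal F$ (union). $\Theta$ is $\vee$-prime if for compatible $\mathcal F\subseteq\Theta$ with $\bigvee\mathcal F\in\Theta$ we have $\bigvee\mathcal F\in\mathcal F$. A space of input histories is a finite $\vee$-prime set of partial functions; $E^\Theta=\bigcup_{h\in\Theta}\mathrm{dom}(h)$, $I^\Theta_\omega=\{h(\omega):h\in\Theta,\omega\in\mathrm{dom}(h)\}$, $\mathrm{Ext}(\Theta)=\{\bigvee\mathcal F:\emptyset\ne\mathcal F\subseteq\Theta\text{ compatible}\}$. Free-choice: maximal elements of $\mathrm{Ext}(\Theta)$ are exactly the total functions in $\prod_{\omega\in E^\Theta}I^\Theta_\omega$. $\mathrm{tips}_\Theta(h)=\mathrm{dom}(h)\setminus\bigcup\{\mathrm{dom}(k):k\in\mathrm{Ext}(\Theta),k<h\}$. Causally complete: free-choice and $|\mathrm{tips}_\Theta(h)|=1$ for all $h\in\Theta$. Spaces are ordered by $\Theta_1\le\Theta_2$ iff $\mathrm{Ext}(\Theta_1)\supseteq\mathrm{Ext}(\Theta_2)$. The causal completions $\mathrm{CC}(\Theta)$ are the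 maximal elements of $\{\Theta_1\le\Theta:\Theta_1\text{ causally complete}\}$. *)

From Stdlib Require Import List.
Set Implicit Arguments.

Section PartialFunctions.
Variables (I V : Type).

Definition pfun := I -> option V.

Definition pset := pfun -> Prop.

Definition in_dom (h : pfun) (i : I) : Prop := h i <> None.

Definition pf_le (h k : pfun) : Prop := forall i v, h i = Some v -> k i = Some v.
Definition pf_lt (h k : pfun) : Prop := pf_le h k /\ h <> k.

Definition compatible (F : pset) : Prop :=
  forall f g, F f -> F g -> forall i v w, f i = Some v -> g i = Some w -> v = w.

Definition is_join (F : pset) (h : pfun) : Prop :=
  forall i v, h i = Some v <-> exists f, F f /\ f i = Some v.

Definition subset (F G : pset) : Prop := forall f, F f -> G f.

Definition finite_set (T : pset) : Prop :=
  exists l : list pfun, forall h, T h <-> In h l.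

Definition vee_prime (T : pset) : Prop :=
  forall F h, subset F T -> compatible F -> is_join F h -> T h -> F h.

(* A space of input histories: a finite vee-prime set of partial functions. *)
Definition space (T : pset) : Prop := finite_set T /\ vee_prime T.

Definition Ev (T : pset) (i : I) : Prop := exists h, T h /\ in_dom h i.

Definition Iv (T : pset) (i : I) (v : V) : Prop := exists h, T h /\ h i = Some v.

Definition Ext (T : pset) (k : pfun) : Prop :=
  exists F, (exists f, F f) /\ subset F T /\ compatible F /\ is_join F k.

Definition maximal_in (S : pset) (k : pfun) : Prop :=
  S k /\ forall k', S k' -> pf_le k k' -> k' = k.

Definition total_in (T : pset) (k : pfun) : Prop :=
  (forall i, in_dom k i <-> Ev T i) /\ (forall i v, k i = Some v -> Iv T i v).

Definition free_choice (T : pset) : Prop :=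
  forall k, maximal_in (Ext T) k <-> total_in T k.

Definition tips (T : pset) (h : pfun) (i : I) : Prop :=
  in_dom h i /\ ~ (exists k, Ext T k /\ pf_lt k h /\ in_dom k i).

Definition causally_complete (T : pset) : Prop :=
  free_choice T /\ forall h, T h -> exists! i, tips T h i.

Definition space_le (T1 T2 : pset) : Prop := subset (Ext T2) (Ext T1).

Definition causal_completion (T Th : pset) : Prop :=
  (space Th /\ space_le Th T /\ causally_complete Th) /\
  forall T1, space T1 -> space_le T1 T -> causally_complete T1 ->
    space_le Th T1 -> space_le T1 Th.

End PartialFunctions.

(* Restrict the completion to the histories whose values all lie in the
   value sets I^Θ_ω of Θ.  The restricted space is again a causally complete
   space below Θ: below a Θ-valued history it has the same extensions as the
   completion, hence the same tips, and, Θ being free-choice, its maximal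
   extensions are exactly the total functions in ∏ I^Θ_ω.  Since it lies
   below the completion, maximality of the completion forces every history of
   the completion to be Θ-valued; conversely every history of Θ is a join of
   histories of the completion, so no value of Θ is lost. *)

From Stdlib Require Import List Classical ClassicalEpsilon FunctionalExtensionality.
Set Implicit Arguments.
Unset Strict Implicit.

Lemma list_filter_ex (A : Type) (l : list A) (Q : A -> Prop) :
  exists l', forall x, In x l' <-> In x l /\ Q x.
Proof.
  induction l as [|a l [l' IH]].
  - exists nil. simpl. tauto.
  - destruct (classic (Q a)) as [Ha|Ha].
    + exists (a :: l'). intros x. simpl. rewrite IH.
      split; [intros [<-|[]]|intros [[<-|]]]; auto.
    + exists l'. intros x. simpl. rewrite IH.
      split; [tauto|intros [[<-|] ?]; tauto].
Qed.

Section InputHistories.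
Variables I V : Type.

Definition valued_in (A : I -> V -> Prop) (h : pfun I V) : Prop :=
  forall i v, h i = Some v -> A i v.

Definition restrict (S : pset I V) (A : I -> V -> Prop) : pset I V :=
  fun h => S h /\ valued_in A h.

Lemma Ev_Iv (S : pset I V) i : Ev S i <-> exists v, Iv S i v.
Proof.
  unfold Ev, Iv, in_dom. split.
  - intros [h [Hh Hd]]. destruct (h i) as [v|] eqn:E; [|congruence].
    exists v, h. auto.
  - intros [v [h [Hh E]]]. exists h. split; congruence.
Qed.

Lemma finite_set_subset (S S' : pset I V) :
  finite_set S -> subset S' S -> finite_set S'.
Proof.
  intros [l Hl] HS'. destruct (list_filter_ex l S') as [l' Hl'].
  exists l'. intros h. rewrite Hl', <- Hl. split; [intros H|intros []]; auto.
Qed.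

Lemma vee_prime_subset (S S' : pset I V) :
  vee_prime S -> subset S' S -> vee_prime S'.
Proof.
  intros Hvp HS' F h HF Hc Hj Hh. apply (Hvp F h); auto.
  intros f Hf. apply HS', HF, Hf.
Qed.

Lemma space_restrict (S : pset I V) A : space S -> space (restrict S A).
Proof.
  intros [Hfin Hvp]. assert (Hsub : subset (restrict S A) S) by now intros h [].
  split; [exact (finite_set_subset Hfin Hsub)|exact (vee_prime_subset Hvp Hsub)].
Qed.

Lemma join_ub (F : pset I V) k f : is_join F k -> F f -> pf_le f k.
Proof. intros Hj Hf i v E. apply Hj. exists f. auto. Qed.

Lemma Ext_self (S : pset I V) : subset S (Ext S).
Proof.
  intros h Hh. exists (fun f => f = h). repeat split.
  - exists h. reflexivity.
  - now intros f ->.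
  - intros f g -> -> i v w. congruence.
  - intros E. exists h. auto.
  - now intros [f [-> E]].
Qed.

Lemma Ext_mono (S S' : pset I V) : subset S S' -> subset (Ext S) (Ext S').
Proof.
  intros HS k [F [Hn [HF Hjc]]]. exists F. split; [exact Hn|split; [|exact Hjc]].
  intros f Hf. apply HS, HF, Hf.
Qed.

Lemma Iv_Ext (S : pset I V) i v : Iv (Ext S) i v <-> Iv S i v.
Proof.
  split.
  - intros [k [[F [_ [HF [_ Hj]]]] E]]. apply Hj in E.
    destruct E as [f [Hf E]]. exists f. auto.
  - intros [h [Hh E]]. exists h. split; auto. apply Ext_self, Hh.
Qed.

Lemma Iv_space_le (S S' : pset I V) i v : space_le S S' -> Iv S' i v -> Iv S i v.
Proof.
  intros Hle Hv. apply Iv_Ext. apply Iv_Ext in Hv.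
  destruct Hv as [k [Hk E]]. exists k. auto.
Qed.

Lemma valued_in_Iv (S : pset I V) h : S h -> valued_in (Iv S) h.
Proof. intros Hh i v E. exists h. auto. Qed.

Lemma valued_in_le A (h k : pfun I V) : pf_le h k -> valued_in A k -> valued_in A h.
Proof. intros Hhk Hk i v E. apply Hk, Hhk, E. Qed.

Lemma valued_in_Ext (S : pset I V) A k :
  (forall f, S f -> valued_in A f) -> Ext S k -> valued_in A k.
Proof.
  intros HS [F [_ [HF [_ Hj]]]] i v E. apply Hj in E.
  destruct E as [f [Hf E]]. exact (HS f (HF f Hf) i v E).
Qed.

Lemma Ext_restrict (S : pset I V) A k :
  Ext S k -> valued_in A k -> Ext (restrict S A) k.
Proof.
  intros [F [Hn [HF Hcj]]] Hk. exists F. split; [exact Hn|split; [|exact Hcj]].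
  intros f Hf. split; [exact (HF f Hf)|].
  exact (valued_in_le (join_ub (proj2 Hcj) Hf) Hk).
Qed.

Lemma Iv_restrict (S : pset I V) A i v : Iv (restrict S A) i v -> A i v.
Proof. intros [h [[_ Hh] E]]. exact (Hh i v E). Qed.

Lemma eq_tips (S S' : pset I V) h :
  (forall k, pf_lt k h -> Ext S k <-> Ext S' k) ->
  forall i, tips S h i <-> tips S' h i.
Proof.
  intros HSS' i. unfold tips. split; intros [Hd Hn]; split; auto;
    intros [k [Hk [Hlt Hki]]]; apply Hn; exists k; split; auto; apply (HSS' k Hlt); auto.
Qed.

Lemma Ev_eq_of_Iv_eq (S S' : pset I V) :
  (forall i v, Iv S i v <-> Iv S' i v) -> forall i, Ev S i <-> Ev S' i.
Proof. intros HSS' i. rewrite !Ev_Iv. now setoid_rewrite HSS'. Qed.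

Lemma total_in_Iv (S S' : pset I V) k :
  (forall i v, Iv S i v <-> Iv S' i v) -> total_in S k <-> total_in S' k.
Proof.
  intros HSS'. unfold total_in.
  setoid_rewrite (Ev_eq_of_Iv_eq HSS'). now setoid_rewrite HSS'.
Qed.

Lemma total_in_maximal (T : pset I V) (k k' : pfun I V) :
  total_in T k -> valued_in (Iv T) k' -> pf_le k k' -> k' = k.
Proof.
  intros [Hdom _] Hk' Hkk'. apply functional_extensionality. intros i.
  destruct (k' i) as [v|] eqn:E.
  - assert (Hd : in_dom k i) by (apply Hdom, Ev_Iv; exists v; exact (Hk' i v E)).
    unfold in_dom in Hd. destruct (k i) as [w|] eqn:Ew; [|congruence].
    apply Hkk' in Ew. congruence.
  - destruct (k i) as [w|] eqn:Ew; [|reflexivity]. apply Hkk' in Ew. congruence.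
Qed.

Lemma total_in_extension (T : pset I V) (k : pfun I V) :
  valued_in (Iv T) k -> exists t, total_in T t /\ pf_le k t.
Proof.
  intros Hk.
  assert (Hext : forall i, exists o : option V,
    (forall v, k i = Some v -> o = Some v) /\ (o <> None <-> Ev T i) /\
    (forall v, o = Some v -> Iv T i v)).
  { intros i. destruct (k i) as [v|] eqn:E.
    - exists (Some v). split; [congruence|split].
      + split; [intros _|congruence]. apply Ev_Iv. exists v. exact (Hk i v E).
      + intros w [= <-]. exact (Hk i v E).
    - destruct (classic (Ev T i)) as [HE|HE].
      + destruct (proj1 (Ev_Iv T i) HE) as [v Hv]. exists (Some v).
        split; [congruence|split; [split; [intros _; exact HE|congruence]|]].
        now intros w [= <-].
      + exists None. split; [congruence|split; [split; [now intros []|tauto]|congruence]]. }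
  destruct (choice _ Hext) as [t Ht]. exists t.
  split; [split|]; intros i; [apply Ht|intros v; apply Ht|intros v; apply Ht].
Qed.

Lemma maximal_Ext_iff_total_in (T S : pset I V) :
  free_choice T -> subset (Ext T) (Ext S) ->
  (forall k, Ext S k -> valued_in (Iv T) k) ->
  forall k, maximal_in (Ext S) k <-> total_in T k.
Proof.
  intros Hfc HTS HSv k. split.
  - intros [Hk Hmax].
    destruct (total_in_extension (HSv k Hk)) as [t [Ht Hkt]].
    assert (HtS : Ext S t) by apply HTS, (proj2 (Hfc t) Ht).
    rewrite <- (Hmax t HtS Hkt). exact Ht.
  - intros Hk. split; [apply HTS, (proj2 (Hfc k) Hk)|].
    intros k' Hk' Hkk'. exact (total_in_maximal Hk (HSv k' Hk') Hkk').
Qed.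

Lemma tips_restrict (S : pset I V) A h :
  valued_in A h -> forall i, tips (restrict S A) h i <-> tips S h i.
Proof.
  intros Hh. apply eq_tips. intros k [Hkh _]. split.
  - apply Ext_mono. now intros f [].
  - intros Hk. exact (Ext_restrict Hk (valued_in_le Hkh Hh)).
Qed.

Section RestrictionToValues.
Variables T Th : pset I V.
Hypothesis Th_le_T : space_le Th T.

Let R := restrict Th (Iv T).

Lemma space_le_restrict : space_le R T.
Proof.
  intros k Hk. apply Ext_restrict; [exact (Th_le_T Hk)|].
  exact (valued_in_Ext (@valued_in_Iv T) Hk).
Qed.

Lemma Iv_restrict_Iv i v : Iv R i v <-> Iv T i v.
Proof.
  split; [apply Iv_restrict|].
  exact (Iv_space_le space_le_restrict).
Qed.

Lemma causally_complete_restrict :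
  free_choice T -> causally_complete Th -> causally_complete R.
Proof.
  intros Hfc [_ Htips]. split.
  - intros k. rewrite (total_in_Iv k Iv_restrict_Iv).
    refine (maximal_Ext_iff_total_in Hfc space_le_restrict _ k).
    intros k'. apply valued_in_Ext. now intros f [].
  - intros h [Hh Hhv]. destruct (Htips h Hh) as [i [Hi Huniq]].
    exists i. split; [exact (proj2 (tips_restrict Th Hhv i) Hi)|].
    intros j Hj. apply Huniq. exact (proj1 (tips_restrict Th Hhv j) Hj).
Qed.

End RestrictionToValues.

End InputHistories.

Theorem proposition19 (I V : Type) (T Th : pset I V) :
  space T -> free_choice T -> causal_completion T Th ->
  (forall i, Ev Th i <-> Ev T i) /\
  (forall i, Ev T i -> forall v, Iv Th i v <-> Iv T i v).
Proof.
  intros _ Hfc [[HspTh [Hle Hcc]] Hmax].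
  set (R := restrict Th (Iv T)).
  assert (HR_le_Th : space_le R Th).
  { apply Hmax.
    - exact (space_restrict _ HspTh).
    - exact (space_le_restrict Hle).
    - exact (causally_complete_restrict Hle Hfc Hcc).
    - apply Ext_mono. now intros f []. }
  assert (HIv : forall i v, Iv Th i v <-> Iv T i v).
  { intros i v. split.
    - intros Hv. apply (Iv_restrict_Iv Hle), (Iv_space_le HR_le_Th), Hv.
    - exact (Iv_space_le Hle). }
  split; [exact (Ev_eq_of_Iv_eq HIv)|intros i _ v; apply HIv].
Qed.
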